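(* Let $\Delta$ be the hereditary class property ''bounded maximum degree'' and $\Lambda$ the hereditary class property ''bounded connected components''. Then $\Delta$ is the decomposition horizon of $\Lambda$. Moreover, $\Lambda^\ast=\Lambda^+=\Delta$.
   Context: Graphs are finite and simple. A hereditary class is a class of graphs closed under isomorphism and induced subgraphs. A hereditary class property is a set $\Pi$ of hereditary classes such that $\mathscr C\in\Pi$, $\mathscr D$ hereditary, $\mathscr D\subseteq\mathscr C$ imply $\mathscr D\in\Pi$. $\Delta$ is the set of hereditary classes $\mathscr C$ for which there is $d$ with every graph in $\mathscr C$ having maximum degree at most $d$; $\Lambda$ is the set of hereditary classes $\mathscr C$ for which there is $c$ with every connected component of every graph in $\mathscr C$ having at most $c$ vertices. For non-decreasing $f:\mathbb N\to\mathbb N$ and positive integer $p$, $\mathscr C$ has an $f$-bounded $\Pi$-decomposition with parameter $p$ if there is $\mathscr D_p\in\Pi$ such that every $G\in\mathscr C$ has a partition $V_1,\dots,V_N$ of $V(G)$ with $N\le f(|G|)$ and $G[V_{i_1}\cup\dots\cup V_{i_p}]\in\mathscr D_p$ for all $i_1,\dots,i_p\in[N]$. $\Pi^+$ (resp. $\Pi^\ast$) is the set of hereditary classes that, for every positive integer $p$, have an $f$-bounded $\Pi$-decomposition with parameter $p$ for some constant function $f$ (resp. some non-decreasing $f$ with $f(n)=n^{o(1)}$). $\Pi$ is a decomposition horizon if $\Pi^\ast=\Pi$; the decomposition horizon of $\Lambda$ is the smallest (under inclusion) decomposition horizon containing $\Lambda$. *)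

From mathcomp Require Import all_boot.
Set Implicit Arguments. Unset Strict Implicit. Unset Printing Implicit Defensive.

Record sgraph := SGraph {
  vert : finType;
  adj : rel vert;
  adj_sym : symmetric adj;
  adj_irr : irreflexive adj }.

Definition order (G : sgraph) : nat := #|vert G|.

Definition induced_adj (G : sgraph) (S : {set vert G}) :
  rel {x : vert G | x \in S} := fun x y => adj (val x) (val y).

Lemma induced_sym (G : sgraph) (S : {set vert G}) : symmetric (@induced_adj G S).
Proof. by move=> x y; rewrite /induced_adj adj_sym. Qed.

Lemma induced_irr (G : sgraph) (S : {set vert G}) : irreflexive (@induced_adj G S).
Proof. by move=> x; rewrite /induced_adj adj_irr. Qed.

Definition induced (G : sgraph) (S : {set vert G}) : sgraph :=
  @SGraph {x : vert G | x \in S} (@induced_adj G S) (@induced_sym G S) (@induced_irr G S).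

Definition isomorphic (G H : sgraph) : Prop :=
  exists f : vert G -> vert H,
    bijective f /\ forall x y, adj x y = adj (f x) (f y).

Definition gclass := sgraph -> Prop.

Definition hereditary (C : gclass) : Prop :=
  (forall G H, isomorphic G H -> C G -> C H) /\
  (forall G (S : {set vert G}), C G -> C (induced S)).

Definition gprop := gclass -> Prop.

Definition hcp (P : gprop) : Prop :=
  (forall C, P C -> hereditary C) /\
  (forall C D, P C -> hereditary D -> (forall G, D G -> C G) -> P D).

Definition maxdeg_le (G : sgraph) (d : nat) : Prop :=
  forall v : vert G, #|[set u | adj v u]| <= d.

Definition comp_le (G : sgraph) (c : nat) : Prop :=
  forall v : vert G, #|[set u | connect (@adj G) v u]| <= c.

Definition Delta : gprop := fun C =>
  hereditary C /\ exists d, forall G, C G -> maxdeg_le G d.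

Definition Lambda : gprop := fun C =>
  hereditary C /\ exists c, forall G, C G -> comp_le G c.

Definition nondecreasing (f : nat -> nat) : Prop :=
  forall m n, m <= n -> f m <= f n.

(* f(n) = n^{o(1)}: for every k >= 1, eventually 1 <= f(n) and f(n)^k <= n,
   i.e. f(n) <= n^(1/k) eventually. *)
Definition subpoly (f : nat -> nat) : Prop :=
  forall k, 0 < k -> exists n0, forall n, n0 <= n -> 0 < f n /\ f n ^ k <= n.

(* C has an f-bounded P-decomposition with parameter p.  A partition
   V_1,...,V_N of V(G) is encoded by the map col sending each vertex to
   the index of its part. *)
Definition has_decomp (P : gprop) (f : nat -> nat) (p : nat) (C : gclass) : Prop :=
  exists D : gclass, P D /\
    forall G, C G ->
      exists N, N <= f (order G) /\
      exists col : vert G -> 'I_N,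
        forall idx : 'I_p -> 'I_N,
          D (induced [set v | [exists j : 'I_p, col v == idx j]]).

Definition plus (P : gprop) : gprop := fun C =>
  hereditary C /\
  forall p, 0 < p -> exists c : nat, has_decomp P (fun _ => c) p C.

Definition star (P : gprop) : gprop := fun C =>
  hereditary C /\
  forall p, 0 < p -> exists f, nondecreasing f /\ subpoly f /\ has_decomp P f p C.

Definition horizon (P : gprop) : Prop := forall C, star P C <-> P C.

Definition is_horizon_of (P Q : gprop) : Prop :=
  hcp P /\ horizon P /\ (forall C, Q C -> P C) /\
  (forall P', hcp P' -> horizon P' -> (forall C, Q C -> P' C) ->
     forall C, P C -> P' C).

From Pilot Require Import Defs.
From mathcomp Require Import all_boot.
From mathcomp Require Import zify.
Set Implicit Arguments. Unset Strict Implicit. Unset Printing Implicit Defensive.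

(* If every graph of C has maximum degree at most d, a greedy colouring with
   (d+1)^p + 1 colours separates any two vertices at distance at most p.  A
   connected set of p+1 vertices has diameter at most p, so it meets p+1
   colour classes; hence every union of p classes has components of at most p
   vertices, and Delta is contained in Lambda^+.
   Conversely, let C have Delta-decompositions with parameter 2 into f(n)
   parts, f(n) = n^{o(1)}.  Splitting the neighbourhood of a vertex v by parts
   and applying the decomposition to the closed neighbourhood of v gives
   deg v <= f(deg v + 1) * d, which bounds deg v since f(n)^2 <= n eventually;
   so Delta^* = Delta.  With Lambda contained in Delta, this yields
   Lambda^+ <= Lambda^* <= Delta^* = Delta <= Lambda^+, and any decomposition
   horizon containing Lambda contains Lambda^+ = Delta. *)

Definition nbhd (G : sgraph) (v : vert G) : {set vert G} := [set u | adj v u].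

Definition component (G : sgraph) (v : vert G) : {set vert G} :=
  [set u | connect (@adj G) v u].

Lemma order_induced (G : sgraph) (S : {set vert G}) : Defs.order (induced S) = #|S|.
Proof. by rewrite /Defs.order card_sig; apply: eq_card => x; rewrite !inE. Qed.

Lemma card_nbhd_induced (G : sgraph) (S : {set vert G}) (x : vert (induced S)) :
  #|nbhd x| = #|nbhd (val x) :&: S|.
Proof.
rewrite -(card_imset _ val_inj); apply: eq_card => y.
apply/imsetP/setIP => [[z z_adj ->] | [y_adj yS]].
  by split; [move: z_adj; rewrite !inE | exact: valP].
rewrite inE in y_adj; by exists (exist _ y yS); rewrite // inE.
Qed.

Lemma leq_card_bigcup (T I : finType) (A : {pred I}) (F : I -> {set T}) :
  #|\bigcup_(i in A) F i| <= \sum_(i in A) #|F i|.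
Proof.
elim/big_rec2: _ => [|i n U _ IH]; first by rewrite cards0.
exact: leq_trans (leq_card_setU (F i) U) (leq_add (leqnn _) IH).
Qed.

Lemma connect_homo (T U : finType) (e : rel T) (e' : rel U) (h : T -> U) :
  {homo h : x y / e x y >-> e' x y} ->
  {homo h : x y / connect e x y >-> connect e' x y}.
Proof.
move=> h_homo x _ /connectP [s e_s ->]; apply/connectP.
by exists (map h s); [exact: homo_path h_homo e_s | rewrite last_map].
Qed.

Lemma connect_exit (T : finType) (e : rel T) (A : {pred T}) x y :
  connect e x y -> x \in A -> y \notin A ->
  exists x', exists2 y', x' \in A /\ y' \notin A & e x' y'.
Proof.
move=> /connectP [s e_s ->]; elim: s x e_s => [|z s IH] x /=; first by move=> _ ->.
case/andP=> e_xz e_s xA; have [zA | zNA] := boolP (z \in A).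
  exact: IH.
by move=> _; exists x, z.
Qed.

Lemma card_component_homo (G H : sgraph) (h : vert G -> vert H) (v : vert G) :
  injective h -> {homo h : x y / adj x y >-> adj x y} ->
  #|component v| <= #|component (h v)|.
Proof.
move=> h_inj h_homo; rewrite -(card_imset _ h_inj); apply: subset_leq_card.
apply/subsetP => w /imsetP [u]; rewrite !inE => vu ->.
exact: connect_homo vu.
Qed.

Lemma comp_le_induced (G : sgraph) (S : {set vert G}) c :
  comp_le G c -> comp_le (induced S) c.
Proof.
move=> G_c v; apply: leq_trans (G_c (val v)).
exact: (card_component_homo v val_inj (fun x y xy => xy)).
Qed.

Lemma comp_le_iso (G H : sgraph) c : isomorphic G H -> comp_le G c -> comp_le H c.
Proof.
move=> [f [[g fK gK] f_adj]] G_c w; apply: leq_trans (G_c (g w)).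
apply: (card_component_homo w (can_inj gK)) => x y.
by rewrite f_adj !gK.
Qed.

Lemma Lambda_comp_le c : Lambda (comp_le^~ c).
Proof.
split; last by exists c.
by split=> [G H GH | G S]; [exact: comp_le_iso | exact: comp_le_induced].
Qed.

Lemma Lambda_sub_Delta C : Lambda C -> Delta C.
Proof.
move=> [C_her [c C_c]]; split=> //; exists c => G CG v.
apply: leq_trans (C_c G CG v); apply: subset_leq_card.
by apply/subsetP => u; rewrite !inE => /connect1.
Qed.

Fixpoint ball (G : sgraph) (k : nat) (v : vert G) : {set vert G} :=
  if k is k'.+1 then \bigcup_(w in ball k' v) (w |: nbhd w) else [set v].

Lemma ball_center (G : sgraph) k (v : vert G) : v \in ball k v.
Proof.
elim: k => [|k IH] /=; first by rewrite inE.
by apply/bigcupP; exists v; rewrite ?setU11.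
Qed.

Lemma ball_adj (G : sgraph) k (v w u : vert G) :
  adj w u -> w \in ball k v -> u \in ball k.+1 v.
Proof. by move=> wu wB; apply/bigcupP; exists w; rewrite // !inE wu orbT. Qed.

Lemma ball_subS (G : sgraph) k (v : vert G) : ball k v \subset ball k.+1 v.
Proof. by apply/subsetP => u uB; apply/bigcupP; exists u; rewrite ?setU11. Qed.

Lemma ball_cons (G : sgraph) k (v w : vert G) :
  adj v w -> ball k w \subset ball k.+1 v.
Proof.
move=> vw; elim: k => [|k IH]; apply/subsetP => u.
  by rewrite /= inE => /eqP ->; apply: ball_adj vw (ball_center 0 v).
case/bigcupP => x /(subsetP IH) xB; rewrite !inE => /orP [/eqP -> | xu].
  exact: subsetP (ball_subS _ _) _ xB.
exact: ball_adj xu xB.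
Qed.

Lemma ball_sym (G : sgraph) k (u v : vert G) : (u \in ball k v) = (v \in ball k u).
Proof.
suff sym_ball (x y : vert G) : x \in ball k y -> y \in ball k x.
  by apply/idP/idP; apply: sym_ball.
elim: k x y => [|k IH] x y /=; first by rewrite !inE eq_sym.
case/bigcupP => w /IH yB; rewrite !inE => /orP [/eqP -> | wx].
  exact: subsetP (ball_subS _ _) _ yB.
by apply: subsetP (ball_cons k _) _ yB; rewrite adj_sym.
Qed.

Lemma card_ball (G : sgraph) d k (v : vert G) :
  maxdeg_le G d -> #|ball k v| <= d.+1 ^ k.
Proof.
move=> G_d; elim: k => [|k IH]; first by rewrite cards1.
apply: leq_trans (leq_card_bigcup _ _) _.
apply: (@leq_trans (\sum_(w in ball k v) d.+1)).
  by apply: leq_sum => w _; rewrite cardsU1 -add1n leq_add ?leq_b1 ?G_d.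
by rewrite sum_nat_const expnSr leq_mul2r IH orbT.
Qed.

Lemma ball_homo (G H : sgraph) (h : vert G -> vert H) :
  {homo h : x y / adj x y >-> adj x y} ->
  forall k v u, u \in ball k v -> h u \in ball k (h v).
Proof.
move=> h_homo; elim=> [|k IH] v u /=; first by rewrite !inE => /eqP ->.
case/bigcupP => w /IH hwB; rewrite !inE => /orP [/eqP -> | wu].
  exact: subsetP (ball_subS _ _) _ hwB.
exact: ball_adj (h_homo _ _ wu) hwB.
Qed.

Lemma greedy_colouring (T : finType) (r : rel T) N :
  symmetric r -> (forall x, #|[set y | r x y]| < N) ->
  exists col : T -> 'I_N, forall x y, x != y -> r x y -> col x != col y.
Proof.
move=> r_sym r_lt.
suff [col col_ok] : exists col : T -> 'I_N,
    {in enum T &, forall x y, x != y -> r x y -> col x != col y}.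
  by exists col => x y; apply: col_ok; rewrite mem_enum.
elim: (enum T) => [|x s [col col_ok]].
  by exists (fun x => Ordinal (leq_ltn_trans (leq0n _) (r_lt x))).
pose F := [set col y | y in [set y | r x y]].
have /card_gt0P [c] : 0 < #|~: F|.
  rewrite -(ltn_add2l #|F|) addn0 cardsC card_ord.
  exact: leq_ltn_trans (leq_imset_card _ _) (r_lt x).
rewrite inE => cNF.
have colF y : r x y -> col y \in F by move=> xy; apply: imset_f; rewrite inE.
exists (fun y => if y == x then c else col y) => y z.
rewrite !inE; have [-> | yx] := eqVneq y x; have [-> | zx] := eqVneq z x => //=.
- by move=> _ _ _ /colF zF; apply/eqP => cz; rewrite cz zF in cNF.
- by move=> _ _ _; rewrite r_sym => /colF yF; apply/eqP => yc; rewrite -yc yF in cNF.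
- exact: col_ok.
Qed.

Lemma ball_colouring (G : sgraph) d p : maxdeg_le G d ->
  exists col : vert G -> 'I_(d.+1 ^ p).+1,
    forall u v, u != v -> u \in ball p v -> col u != col v.
Proof.
move=> G_d; apply: greedy_colouring => [u v | v]; first exact: ball_sym.
rewrite ltnS; apply: leq_trans (card_ball p v G_d).
by apply/subset_leq_card/subsetP => u; rewrite inE ball_sym.
Qed.

Lemma component_close_subset (G : sgraph) (v : vert G) m :
  m < #|component v| ->
  exists S : {set vert G}, [/\ #|S| = m.+1, v \in S, S \subset component v
                            & {in S &, forall x y, x \in ball m y}].
Proof.
elim: m => [_ | m IH m_lt].
  exists [set v]; split; rewrite ?cards1 ?set11 ?sub1set ?inE ?connect0 //.
  by move=> x y /set1P -> /set1P ->; apply: ball_center.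
have [S [S_card vS S_comp S_close]] := IH (ltnW m_lt).
have /subsetPn [u u_comp uNS] : ~~ (component v \subset S).
  by apply: contraTN m_lt => /subset_leq_card; rewrite S_card -leqNgt.
rewrite inE in u_comp.
have [x [y [xS yNS] xy]] := connect_exit u_comp vS uNS.
have y_close z : z \in S -> y \in ball m.+1 z.
  by move=> zS; apply: ball_adj xy (S_close x z xS zS).
exists (y |: S); split.
- by rewrite cardsU1 yNS S_card.
- exact: setU1r.
- rewrite subUset sub1set S_comp andbT inE.
  by apply: connect_trans (connect1 xy); move: (subsetP S_comp x xS); rewrite inE.
- move=> a b /setU1P [-> | aS] /setU1P [-> | bS].
  + exact: ball_center.
  + exact: y_close.
  + by rewrite ball_sym y_close.
  + exact: subsetP (ball_subS _ _) _ (S_close a b aS bS).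
Qed.

Lemma comp_le_of_ball_colouring (G : sgraph) p N (col : vert G -> 'I_N) :
  (forall u v, u != v -> u \in ball p v -> col u != col v) ->
  #|col @: [set: vert G]| <= p -> comp_le G p.
Proof.
move=> col_ok few_colours v; rewrite leqNgt; apply/negP.
move=> /component_close_subset [S [S_card _ _ S_close]].
have col_inj : {in S &, injective col}.
  by move=> x y xS yS; apply: contra_eq => xy; apply: col_ok xy (S_close x y xS yS).
have := leq_trans (subset_leq_card (imsetS col (subsetT S))) few_colours.
by rewrite card_in_imset // S_card ltnn.
Qed.

Lemma comp_le_union_parts (G : sgraph) p N (col : vert G -> 'I_N) (idx : 'I_p -> 'I_N) :
  (forall u v, u != v -> u \in ball p v -> col u != col v) ->
  comp_le (induced [set v | [exists j, col v == idx j]]) p.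
Proof.
move=> col_ok; set T := [set v | _].
apply: (@comp_le_of_ball_colouring _ _ _ (fun x : vert (induced T) => col (val x))).
  move=> u v uv /(@ball_homo (induced T) G val (fun x y xy => xy)) uB.
  by apply: (col_ok _ _ _ uB); rewrite (inj_eq val_inj).
apply: (@leq_trans #|idx @: [set: 'I_p]|); last first.
  by rewrite (leq_trans (leq_imset_card _ _)) // cardsT card_ord.
apply/subset_leq_card/subsetP => _ /imsetP [x _ ->].
by have /[!inE] /existsP [j /eqP ->] := valP x; apply: imset_f.
Qed.

Lemma Delta_sub_plus_Lambda C : Delta C -> plus Lambda C.
Proof.
move=> [C_her [d C_d]]; split=> // p _.
exists (d.+1 ^ p).+1, (comp_le^~ p); split; first exact: Lambda_comp_le.
move=> G CG; exists (d.+1 ^ p).+1; split=> //.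
have [col col_ok] := ball_colouring p (C_d G CG).
by exists col => idx; apply: comp_le_union_parts.
Qed.

Lemma maxdeg_le_of_pair_unions (G : sgraph) N d (col : vert G -> 'I_N) :
  (forall idx : 'I_2 -> 'I_N,
     maxdeg_le (induced [set v | [exists j, col v == idx j]]) d) ->
  maxdeg_le G (N * d).
Proof.
move=> parts_d v.
rewrite -sum1_card (partition_big col xpredT) //= -[N in N * d]card_ord.
rewrite -sum_nat_const; apply: leq_sum => j _; rewrite sum1dep_card.
pose idx (t : 'I_2) := if t == ord0 then col v else j.
set T := [set x | [exists t, col x == idx t]].
have vT : v \in T by rewrite inE; apply/existsP; exists ord0.
apply: leq_trans (parts_d idx (exist _ v vT)).
rewrite (card_nbhd_induced (exist _ v vT)) /=.
apply/subset_leq_card/subsetP => u; rewrite !inE => /andP [vu /eqP uj].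
by rewrite vu; apply/existsP; exists ord_max; rewrite uj.
Qed.

Lemma subpoly_linear_bound f : subpoly f ->
  forall c, exists B, forall n, n <= f n.+1 * c -> n <= B.
Proof.
move=> f_sub c; have [n0 f_sqrt] := f_sub 2 isT.
exists (n0 + c * c + 1) => n n_le.
have [n_small | n_large] := ltnP n.+1 n0; first lia.
have [_ fn_sq] := f_sqrt _ n_large.
have : n * n <= n.+1 * (c * c).
  apply: leq_trans (leq_mul n_le n_le) _.
  by rewrite mulnACA mulnn leq_mul2r fn_sq orbT.
nia.
Qed.

Lemma star_Delta_sub C : star Delta C -> Delta C.
Proof.
move=> [C_her decC]; split=> //.
have [f [_ [f_sub [D [[_ [d D_d]] decD]]]]] := decC 2 isT.
have [B B_ok] := subpoly_linear_bound f_sub d.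
exists B => G CG v; apply: B_ok.
set S := v |: nbhd v.
have vS : v \in S := setU11 v _.
have [N [N_le [col parts_D]]] := decD _ (C_her.2 G S CG).
have := maxdeg_le_of_pair_unions (fun idx => D_d _ (parts_D idx)) (exist _ v vS).
rewrite card_nbhd_induced /= (setIidPl (subsetUr _ _)) => deg_v.
apply: leq_trans deg_v (leq_mul _ (leqnn d)).
by rewrite order_induced cardsU1 inE adj_irr add1n in N_le.
Qed.

Lemma hcp_Delta : hcp Delta.
Proof.
split=> [C [] // | C D [_ [d C_d]] D_her DC].
by split=> //; exists d => G /DC /C_d.
Qed.

Lemma has_decomp_mono (P Q : gprop) f g p C :
  (forall D, P D -> Q D) -> (forall n, f n <= g n) ->
  has_decomp P f p C -> has_decomp Q g p C.
Proof.
move=> PQ fg [D [PD decD]]; exists D; split; first exact: PQ.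
move=> G CG; have [N [N_le parts]] := decD G CG.
by exists N; split; first exact: leq_trans N_le (fg _).
Qed.

Lemma subpoly_const c : 0 < c -> subpoly (fun _ => c).
Proof. by move=> c_gt0 k _; exists (c ^ k). Qed.

Lemma star_mono (P Q : gprop) C : (forall D, P D -> Q D) -> star P C -> star Q C.
Proof.
move=> PQ [C_her decC]; split=> // p p_gt0.
have [f [f_mono [f_sub decP]]] := decC p p_gt0.
by exists f; do 2!split=> //; apply: has_decomp_mono PQ (fun n => leqnn _) decP.
Qed.

Lemma plus_sub_star (P : gprop) C : plus P C -> star P C.
Proof.
move=> [C_her decC]; split=> // p p_gt0; have [c decP] := decC p p_gt0.
exists (fun _ => c.+1); split; first by [].
split; first exact: subpoly_const.
exact: has_decomp_mono (fun D PD => PD) (fun n => leqnSn c) decP.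
Qed.

Lemma Delta_sub_star C : Delta C -> star Delta C.
Proof.
move=> DeltaC; split=> [|p _]; first exact: DeltaC.1.
exists (fun _ => 1); split; first by [].
split; first exact: subpoly_const.
exists C; split=> // G CG; exists 1; split=> //.
by exists (fun _ => ord0) => idx; apply: DeltaC.1.2.
Qed.

Theorem mainTheorem3 :
  is_horizon_of Delta Lambda /\
  (forall C, star Lambda C <-> plus Lambda C) /\
  (forall C, plus Lambda C <-> Delta C).
Proof.
have plus_Lambda_Delta C : plus Lambda C <-> Delta C.
  split=> [/plus_sub_star /(star_mono Lambda_sub_Delta) | ].
    exact: star_Delta_sub.
  exact: Delta_sub_plus_Lambda.
have star_Lambda_Delta C : star Lambda C <-> Delta C.
  split=> [/(star_mono Lambda_sub_Delta) | /Delta_sub_plus_Lambda /plus_sub_star //].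
  exact: star_Delta_sub.
split; [split; [exact: hcp_Delta | split; [|split]] | split].
- by move=> C; split; [exact: star_Delta_sub | exact: Delta_sub_star].
- exact: Lambda_sub_Delta.
- move=> P' _ P'_horizon Lambda_P' C.
  move=> /Delta_sub_plus_Lambda /plus_sub_star /(star_mono Lambda_P').
  exact: (P'_horizon C).1.
- by move=> C; apply: iff_trans (star_Lambda_Delta C) (iff_sym (plus_Lambda_Delta C)).
- exact: plus_Lambda_Delta.
Qed.
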